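(* The family $\mathcal{P}^+_{gd}$ is a cofinal subfamily of $\mathcal{P}^+$ (every element of $\mathcal{P}^+$ is extended by some element of $\mathcal{P}^+_{gd}$) and has the amalgamation property: for all $p_0,p_1,p_2\in\mathcal{P}^+_{gd}$ with $p_0\subseteq p_1$ and $p_0\subseteq p_2$ there exist $p_3\in\mathcal{P}^+_{gd}$ and $\alpha\in\mathrm{Aut}(\mathbb{Q},<)$ fixing $\mathrm{Dom}(p_0)\cup\mathrm{Rng}(p_0)$ pointwise such that $p_1\subseteq p_3$ and $\alpha(p_2)\subseteq p_3$. The same holds for $\mathcal{P}^-_{gd}$ and $\mathcal{P}^-$.
   Context: $\mathcal{P}$ is the set of finite partial isomorphisms of $(\mathbb{Q},<)$ (order-preserving bijections between finite subsets), ordered by extension $\subseteq$; for $\alpha\in\mathrm{Aut}(\mathbb{Q},<)$, $\alpha(p)$ has graph $\{(\alpha(x),\alpha(y)):(x,y)\in\mathrm{Graph}(p)\}$. For $a\in\mathrm{Dom}(p)\cup\mathrm{Rng}(p)$, the parity $\wp_p(a)$ is the sign ($+,0,-$) of $p(a)-a$ if $a\in\mathrm{Dom}(p)$, or of $a-p^{-1}(a)$ if $a\in\mathrm{Rng}(p)$. Elements $a,b\in\mathbb{Q}$ are $p$-related if $a=b$, or if $\wp_p(a)=+$ or $\wp_p(b)=+$ and one of $a\le b\le p(a)$, $b\le a\le p(b)$, $p^{-1}(a)\le b\le a$, $p^{-1}(b)\le a\le b$ holds, or if $\wp_p(a)=-$ or $\wp_p(b)=-$ and one of $a\le b\le p^{-1}(a)$,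 $b\le a\le p^{-1}(b)$, $p(a)\le b\le a$, $p(b)\le a\le b$ holds (when defined). The $\sim_p$-classes of the equivalence relation generated by $p$-relatedness are $p$-orbitals; those meeting $\mathrm{Dom}(p)\cup\mathrm{Rng}(p)$ are colored $p$-orbitals, with parity given by $\wp_p$. $\mathcal{P}^+$ ($\mathcal{P}^-$) is the set of $p\in\mathcal{P}$ all of whose colored $p$-orbitals have parity $+$ (resp. $-$). A bad pair of $p$ is a pair $a<a'$ of elements of $\mathrm{Dom}(p)\cup\mathrm{Rng}(p)$ such that either the colored $p$-orbitals of $a,a'$ (possibly equal) and all colored $p$-orbitals between them have parity $+$ and $p(a)$ and $p^{-1}(a')$ are undefined, or they all have parity $-$ and $p(a')$ and $p^{-1}(a)$ are undefined. $\mathcal{P}^+_{gd}$ ($\mathcal{P}^-_{gd}$) is the set of $p\in\mathcal{P}^+$ (resp. $\mathcal{P}^-$) with a single colored $p$-orbital and no bad pairs. *)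

From Stdlib Require Import Relations.
From mathcomp Require Import all_boot all_order all_algebra.
Set Implicit Arguments. Unset Strict Implicit. Unset Printing Implicit Defensive.
Import Order.TTheory GRing.Theory Num.Theory.
Local Open Scope ring_scope.

(* A finite partial map on Q is represented by (a finite list giving) its graph. *)
Definition pmap := seq (rat * rat).

(* Finite partial isomorphism of (Q,<): order-preserving bijection between
   finite subsets (on a total order this also gives functionality/injectivity). *)
Definition is_pi (p : pmap) : Prop :=
  forall a b a' b', (a, b) \in p -> (a', b') \in p -> (a < a') = (b < b').

Definition extends (q p : pmap) : Prop := {subset p <= q}.

Definition in_dom (p : pmap) (a : rat) : Prop := exists b, (a, b) \in p.
Definition in_rng (p : pmap) (a : rat) : Prop := exists b, (b, a) \in p.
Definition in_DR (p : pmap) (a : rat) : Prop := in_dom p a \/ in_rng p a.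

Inductive sgn := Pos | Zero | Neg.
Definition sign_of (x : rat) : sgn :=
  if 0 < x then Pos else if x == 0 then Zero else Neg.

Definition parity (p : pmap) (a : rat) (s : sgn) : Prop :=
  exists b, ((a, b) \in p /\ sign_of (b - a) = s) \/
            ((b, a) \in p /\ sign_of (a - b) = s).

Definition related (p : pmap) (a b : rat) : Prop :=
  a = b \/
  ((parity p a Pos \/ parity p b Pos) /\
    ((exists c, (a, c) \in p /\ a <= b /\ b <= c) \/
     (exists c, (b, c) \in p /\ b <= a /\ a <= c) \/
     (exists c, (c, a) \in p /\ c <= b /\ b <= a) \/
     (exists c, (c, b) \in p /\ c <= a /\ a <= b))) \/
  ((parity p a Neg \/ parity p b Neg) /\
    ((exists c, (c, a) \in p /\ a <= b /\ b <= c) \/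
     (exists c, (c, b) \in p /\ b <= a /\ a <= c) \/
     (exists c, (a, c) \in p /\ c <= b /\ b <= a) \/
     (exists c, (b, c) \in p /\ c <= a /\ a <= b))).

(* ~_p : equivalence relation generated by p-relatedness;
   the p-orbital of a is the class {b | sim p a b}. *)
Definition sim (p : pmap) : relation rat := clos_refl_sym_trans rat (related p).

Definition orbital_parity (p : pmap) (a : rat) (s : sgn) : Prop :=
  forall b, sim p a b -> in_DR p b -> parity p b s.

Definition Psign (s : sgn) (p : pmap) : Prop :=
  is_pi p /\ forall a, in_DR p a -> orbital_parity p a s.

Definition single_colored (p : pmap) : Prop :=
  (exists a, in_DR p a) /\ forall a b, in_DR p a -> in_DR p b -> sim p a b.

Definition between_parity (p : pmap) (a a' : rat) (s : sgn) : Prop :=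
  orbital_parity p a s /\ orbital_parity p a' s /\
  forall x, in_DR p x -> a <= x -> x <= a' -> orbital_parity p x s.

Definition bad_pair (p : pmap) (a a' : rat) : Prop :=
  in_DR p a /\ in_DR p a' /\ a < a' /\
  ((between_parity p a a' Pos /\ ~ in_dom p a /\ ~ in_rng p a') \/
   (between_parity p a a' Neg /\ ~ in_dom p a' /\ ~ in_rng p a)).

Definition Pgd (s : sgn) (p : pmap) : Prop :=
  Psign s p /\ single_colored p /\ forall a a', ~ bad_pair p a a'.

Definition is_aut (f : rat -> rat) : Prop :=
  bijective f /\ forall x y, x < y -> f x < f y.

Definition act (f : rat -> rat) (p : pmap) : pmap :=
  [seq (f xy.1, f xy.2) | xy <- p].

(* Every map in P+ moves the points of its domain up, so it extends to an
   automorphism g of (Q,<) with g x >= x + d for some fixed d > 0: extend it by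
   piecewise affine maps, then take the pointwise maximum with x |-> x + d.
   Restricting such a g to overlapping segments of finitely many of its orbits
   gives a map in P+_gd, whence cofinality.  For amalgamation, extend p1 and p2
   to such g1 and g2.  As p0 has no bad pair, its orbits all start below a
   point c at which they have all not yet ended.  Spreading a map from
   [c, g2 c) onto [c, g1 c) along the fundamental domains of g2 gives an
   automorphism alpha with alpha g2 = g1 alpha; choosing that map to fix the
   points of p0 just above c forces alpha to fix Dom p0 ∪ Rng p0.  A restriction
   of g1 to orbit segments through Dom p1 and alpha (Dom p2) is the amalgam.
   Inverting maps exchanges P+ and P-. *)

From Pilot Require Import Defs.
From mathcomp Require Import all_boot all_order all_algebra.
From mathcomp Require Import ring lra zify.
From Stdlib Require Import Relations ClassicalEpsilon.
Set Implicit Arguments. Unset Strict Implicit. Unset Printing Implicit Defensive.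
Import Order.TTheory GRing.Theory Num.Theory.
Local Open Scope ring_scope.

Local Notation pmap := Defs.pmap.

Lemma sign_of_Pos v : sign_of v = Pos <-> 0 < v.
Proof. by rewrite /sign_of; case: ltP => // _; case: eqP. Qed.

Lemma sign_of_Neg v : sign_of v = Neg <-> v < 0.
Proof. by rewrite /sign_of; case: ltgtP. Qed.

Lemma sim_refl p x : sim p x x. Proof. exact: rst_refl. Qed.
Lemma sim_sym p x y : sim p x y -> sim p y x. Proof. exact: rst_sym. Qed.
Lemma sim_trans p y x z : sim p x y -> sim p y z -> sim p x z. Proof. exact: rst_trans. Qed.
Lemma related_sim p x y : related p x y -> sim p x y. Proof. exact: rst_step. Qed.

Lemma pi_cons a b p : is_pi ((a, b) :: p) -> is_pi p.
Proof. by move=> abp x y x' y' xy x'y'; apply: abp; rewrite inE ?xy ?x'y' orbT. Qed.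

Lemma pi_fun p a b b' : is_pi p -> (a, b) \in p -> (a, b') \in p -> b = b'.
Proof.
move=> pi_p ab ab'; have e1 := pi_p _ _ _ _ ab ab'; have e2 := pi_p _ _ _ _ ab' ab.
by apply/eqP; rewrite eq_le !leNgt -e1 -e2 ltxx.
Qed.

Lemma Psign_Pos_lt p a b : Psign Pos p -> (a, b) \in p -> a < b.
Proof.
move=> [pi_p pP] ab; have aDR : in_DR p a by left; exists b.
case: (pP a aDR a (sim_refl _ _) aDR) => b' [[ab' /sign_of_Pos]|[b'a /sign_of_Pos]].
  by rewrite (pi_fun pi_p ab ab') subr_gt0.
by rewrite subr_gt0 (pi_p _ _ _ _ b'a ab).
Qed.

Lemma in_domE p x : in_dom p x <-> x \in [seq ab.1 | ab <- p].
Proof.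
split=> [[y xy]|/mapP[[x' y] xy /= ->]]; last by exists y.
by rewrite (map_f fst xy).
Qed.

Lemma in_rngE p x : in_rng p x <-> x \in [seq ab.2 | ab <- p].
Proof.
split=> [[y yx]|/mapP[[y x'] yx /= ->]]; last by exists y.
by rewrite (map_f snd yx).
Qed.

(** * Automorphisms of ordered fields *)

Definition aut_pair (R : realFieldType) (f f' : R -> R) :=
  [/\ {homo f : x y / x < y}, cancel f f' & cancel f' f].

Section AutPair.
Variables (R : realFieldType) (f f' g g' : R -> R).
Hypotheses (fA : aut_pair f f') (gA : aut_pair g g').

Lemma aut_pair_le : {mono f : x y / x <= y}.
Proof. by case: fA => /le_mono. Qed.

Lemma aut_pair_lt : {mono f : x y / x < y}.
Proof. exact: leW_mono aut_pair_le. Qed.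

Lemma aut_pairV : aut_pair f' f.
Proof.
case: fA => _ fK f'K; split=> // x y xy.
by rewrite -aut_pair_lt !f'K.
Qed.

Lemma aut_pair_id : aut_pair (@id R) id.
Proof. by split. Qed.

Lemma aut_pair_comp : aut_pair (f \o g) (g' \o f').
Proof.
case: fA gA => fh fK f'K [gh gK g'K]; split=> [x y /gh /fh //||] x /=.
  by rewrite fK gK.
by rewrite g'K f'K.
Qed.

Lemma eq_aut_pair h h' : f =1 h -> f' =1 h' -> aut_pair h h'.
Proof.
case: fA => fh fK f'K ef ef'.
split=> [x y xy|x|x]; first by rewrite -!ef; exact: fh.
  by rewrite -ef -ef' fK.
by rewrite -ef' -ef f'K.
Qed.

End AutPair.

Lemma aut_pair_iter (R : realFieldType) (f f' : R -> R) n :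
  aut_pair f f' -> aut_pair (iter n f) (iter n f').
Proof.
move=> fA; elim: n => [|n IH]; first exact: aut_pair_id.
by apply: (eq_aut_pair (aut_pair_comp IH fA)) => x //=; rewrite -iterSr.
Qed.

Lemma aut_pair_max (R : realFieldType) (f f' g g' : R -> R) :
  aut_pair f f' -> aut_pair g g' -> aut_pair (f \max g) (f' \min g').
Proof.
move=> fA gA; have [fh fK f'K] := fA; have [gh gK g'K] := gA.
have [f'h _ _] := aut_pairV fA; have [g'h _ _] := aut_pairV gA.
have minh : {homo f' \min g' : x y / x < y}.
  by move=> x y xy /=; rewrite lt_min !gt_min f'h // g'h // !orbT.
have maxK : cancel (f \max g) (f' \min g').
  move=> x /=; case: (leP (f x) (g x)) => fg.
    by rewrite gK min_r // -(aut_pair_le fA) f'K.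
  by rewrite fK min_l // -(aut_pair_le gA) g'K ltW.
split=> //; last exact: inj_can_sym maxK (inc_inj (le_mono minh)).
by move=> x y xy /=; rewrite gt_max !lt_max fh // gh // orbT.
Qed.

Lemma aut_pair_is_aut (f f' : rat -> rat) : aut_pair f f' -> is_aut f.
Proof. by case=> fh fK f'K; split=> //; exists f'. Qed.

Definition glue (R : realFieldType) (s : R) (f g : R -> R) x :=
  if x <= s then f x else g x.

Section Glue.
Variables (R : realFieldType) (s : R) (f f' g g' : R -> R).
Hypotheses (fA : aut_pair f f') (gA : aut_pair g g') (fg_s : f s = g s).

Lemma glue_homo : {homo glue s f g : x y / x < y}.
Proof.
case: fA gA => fh _ _ [gh _ _] x y xy; rewrite /glue.
case: (leP x s) => xs; case: (leP y s) => ys.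
- exact: fh.
- by rewrite (le_lt_trans _ (gh _ _ ys)) // -fg_s (aut_pair_le fA).
- by move: (lt_le_trans (lt_trans xs xy) ys); rewrite ltxx.
- exact: gh.
Qed.

Lemma glueK : cancel (glue s f g) (glue (f s) f' g').
Proof.
case: fA gA => _ fK _ [_ gK _] x; rewrite /glue.
case: (leP x s) => xs; first by rewrite (aut_pair_le fA) xs fK.
by rewrite fg_s (aut_pair_le gA) leNgt xs gK.
Qed.

End Glue.

Lemma aut_pair_glue (R : realFieldType) (s : R) (f f' g g' : R -> R) :
  aut_pair f f' -> aut_pair g g' -> f s = g s ->
  aut_pair (glue s f g) (glue (f s) f' g').
Proof.
move=> fA gA fg_s; split; [exact: glue_homo fA gA fg_s | exact: glueK fA gA fg_s |].
have [_ fK _] := fA; have [_ gK _] := gA.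
have f'g's : f' (f s) = g' (f s) by rewrite fK fg_s gK.
by have := glueK (aut_pairV fA) (aut_pairV gA) f'g's; rewrite fK.
Qed.

Definition affine (R : realFieldType) (x0 x1 y0 y1 x : R) :=
  y0 + (x - x0) * ((y1 - y0) / (x1 - x0)).

Section Affine.
Variables (R : realFieldType) (x0 x1 y0 y1 : R).
Hypotheses (x01 : x0 < x1) (y01 : y0 < y1).

Lemma affine_l : affine x0 x1 y0 y1 x0 = y0.
Proof. by rewrite /affine subrr mul0r addr0. Qed.

Lemma affine_r : affine x0 x1 y0 y1 x1 = y1.
Proof. by rewrite /affine mulrCA divff ?mulr1 ?subrKC // subr_eq0 gt_eqF. Qed.

Lemma aut_pair_affine : aut_pair (affine x0 x1 y0 y1) (affine y0 y1 x0 x1).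
Proof.
have dx : x1 - x0 != 0 by rewrite subr_eq0 gt_eqF.
have dy : y1 - y0 != 0 by rewrite subr_eq0 gt_eqF.
split=> [x y xy|x|x]; rewrite /affine; last 2 first.
- by field; rewrite dx dy.
- by field; rewrite dx dy.
by rewrite ltrD2l ltr_pM2r ?ltrD2r // divr_gt0 // subr_gt0.
Qed.

End Affine.

Lemma exists_aut_pair_move (R : realFieldType) (l u a a' : R) :
  l < a -> l < a' -> a < u -> a' < u ->
  exists f f', [/\ aut_pair f f', f a = a' & forall x, x <= l \/ u <= x -> f x = x].
Proof.
move=> la la' au a'u.
pose upper := glue u (affine a u a' u) id.
pose middle := glue a (affine l a l a') upper.
have upperA := aut_pair_glue (aut_pair_affine au a'u) (aut_pair_id R) (affine_r a' u au).
have upper_a : affine l a l a' a = upper a.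
  by rewrite (affine_r l a' la) /upper /glue ltW // affine_l.
have middleA := aut_pair_glue (aut_pair_affine la la') upperA upper_a.
have middle_l : id l = middle l by rewrite /= /middle /glue ltW // affine_l.
have bumpA := aut_pair_glue (aut_pair_id R) middleA middle_l.
eexists _, _; split; first exact: bumpA.
  by rewrite /glue leNgt la /middle /glue lexx (affine_r l a' la).
move=> x [xl|ux]; first by rewrite /glue xl.
rewrite /glue /middle /glue /upper /glue leNgt (lt_le_trans la (le_trans (ltW au) ux)).
rewrite leNgt (lt_le_trans au ux) /=; case: ifP => // xu.
have -> : x = u by apply/eqP; rewrite eq_le xu.
by rewrite (affine_r a' u au).
Qed.

Lemma exists_aut_pair_fix_below (R : realFieldType) (l a a' : R) :
  l < a -> l < a' ->
  exists f f', [/\ aut_pair f f', f a = a' & forall x, x <= l -> f x = x].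
Proof.
move=> la la'; pose u := Num.max a a' + 1.
have max_u : Num.max a a' < u by rewrite /u ltrDl.
have [au a'u] : a < u /\ a' < u.
  by split; apply: le_lt_trans max_u; rewrite le_max lexx ?orbT.
have [f [f' [fA fa f_fix]]] := exists_aut_pair_move la la' au a'u.
by exists f, f'; split=> // x xl; apply: f_fix; left.
Qed.

Lemma exists_gap_below (R : realFieldType) (X : seq R) m :
  exists2 l, l < m & forall x, x \in X -> x < m -> x <= l.
Proof.
exists (\big[Num.max/(m - 1)]_(x <- X | x < m) x).
  by apply: bigmax_lt => //; rewrite gtrDl ltrN10.
by move=> x xX xm; apply: le_bigmax_seq.
Qed.

Lemma exists_gap_above (R : realFieldType) (X : seq R) m :
  exists2 u, m < u & forall x, x \in X -> m < x -> u <= x.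
Proof.
exists (\big[Num.min/(m + 1)]_(x <- X | m < x) x).
  by apply: lt_bigmin => //; rewrite ltrDl.
by move=> x xX xm; apply: ge_bigmin_seq.
Qed.

Theorem pi_extends_to_aut (p : pmap) : is_pi p ->
  exists f f', aut_pair f f' /\ forall a b, (a, b) \in p -> f a = b.
Proof.
elim: p => [|[a b] p IH] abp; first by exists id, id; split=> //; exact: aut_pair_id.
have [f [f' [fA fp]]] := IH (pi_cons abp).
(* Precompose f with a bump moving a to f^-1 b inside a gap of Dom p. *)
have [_ _ f'K] := fA.
set a' := f' b.
have [l lm lX] := exists_gap_below [seq ab.1 | ab <- p] (Num.min a a').
have [u Mu uX] := exists_gap_above [seq ab.1 | ab <- p] (Num.max a a').
have outside x y : (x, y) \in p -> [\/ x <= l, u <= x | x = a /\ a' = a].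
  move=> xy; have xX : x \in [seq ab.1 | ab <- p] by apply/mapP; exists (x, y).
  have xa : (x < a) = (x < a').
    by rewrite (abp x y a b) ?inE ?xy ?eqxx ?orbT // -(fp _ _ xy) -(f'K b) (aut_pair_lt fA).
  have ax : (a < x) = (a' < x).
    by rewrite (abp a b x y) ?inE ?xy ?eqxx ?orbT // -(fp _ _ xy) -(f'K b) (aut_pair_lt fA).
  case: (ltgtP x a) => [xa'|ax'|ex].
  - by apply: Or31; apply: lX; rewrite // lt_min -xa xa'.
  - by apply: Or32; apply: uX; rewrite // gt_max -ax ax'.
  - subst x; apply: Or33; split=> //.
    by apply/eqP; rewrite eq_le !leNgt -xa -ax ltxx.
have [h [h' [hA ha hout]]] : exists h h', [/\ aut_pair h h', h a = a' &
    forall x, x <= l \/ u <= x -> h x = x].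
  apply: exists_aut_pair_move.
  - by apply: lt_le_trans lm _; rewrite ge_min lexx.
  - by apply: lt_le_trans lm _; rewrite ge_min lexx orbT.
  - by apply: le_lt_trans _ Mu; rewrite le_max lexx.
  - by apply: le_lt_trans _ Mu; rewrite le_max lexx orbT.
exists (f \o h), (h' \o f'); split; first exact: aut_pair_comp.
move=> x y; rewrite inE => /orP[/eqP[-> ->]|xy] /=; first by rewrite ha f'K.
rewrite -(fp _ _ xy); congr f.
case: (outside _ _ xy) => [xl|ux|[-> e]]; last by rewrite ha e.
  exact: hout (or_introl xl).
exact: hout (or_intror ux).
Qed.

Lemma aut_pair_shift (R : realFieldType) (d : R) :
  aut_pair (fun x => x + d) (fun x => x - d).
Proof. by split=> [x y|x|x]; rewrite ?ltrD2r ?addrK ?subrK. Qed.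

Definition uniformly_positive (R : realFieldType) (g g' : R -> R) :=
  aut_pair g g' /\ exists2 d, 0 < d & forall x, x + d <= g x.

Lemma pi_pos_extends_to_uniformly_positive (p : pmap) :
  is_pi p -> (forall a b, (a, b) \in p -> a < b) ->
  exists g g', uniformly_positive g g' /\ forall a b, (a, b) \in p -> g a = b.
Proof.
move=> pi_p p_pos; have [f [f' [fA fp]]] := pi_extends_to_aut pi_p.
pose d := \big[Num.min/1]_(ab <- p) (ab.2 - ab.1).
have d_gt0 : 0 < d.
  by rewrite /d big_seq; apply: lt_bigmin => // -[a b] /p_pos; rewrite subr_gt0.
have d_le a b : (a, b) \in p -> d <= b - a by move=> ab; exact: ge_bigmin_seq ab _.
exists (f \max (fun x => x + d)), (f' \min (fun x => x - d)); split.
  split; first exact: aut_pair_max fA (aut_pair_shift d).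
  by exists d => // x /=; rewrite le_max lexx orbT.
move=> a b ab /=; rewrite (fp _ _ ab) max_l //.
by have := d_le _ _ ab; lra.
Qed.

(** * Integer powers and fundamental domains *)

Definition ziter (T : Type) (g g' : T -> T) (k : int) : T -> T :=
  match k with Posz n => iter n g | Negz n => iter n.+1 g' end.

Definition zindex (R : realFieldType) (g g' : R -> R) (c x : R) : int :=
  epsilon (inhabits 0) (fun k : int => ziter g g' k c <= x < ziter g g' (k + 1) c).

Section ZPowers.
Variables (R : archiRealFieldType) (g g' : R -> R).
Hypothesis gP : uniformly_positive g g'.

Local Notation gA := gP.1.
Local Notation z := (ziter g g').

Lemma exists_iter_gt x y : exists n, y < iter n g x.
Proof.
have [_ [d d_gt0 g_ge]] := gP.
have iter_ge n : x + n%:R * d <= iter n g x.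
  elim: n => [|n IH]; first by rewrite mul0r addr0.
  rewrite -natr1 mulrDl mul1r addrA /=; apply: le_trans (g_ge _).
  by rewrite lerD2r.
exists (Num.bound (`|y - x| / d)); apply: lt_le_trans (iter_ge _).
have := archi_boundP (divr_ge0 (normr_ge0 (y - x)) (ltW d_gt0)).
rewrite ltr_pdivrMr // => bd; have := ler_norm (y - x); lra.
Qed.

Lemma exists_iter_lt x y : exists n, iter n g' x < y.
Proof.
have [n xn] := exists_iter_gt y x; exists n.
have [iter_h iterK _] := aut_pair_iter n (aut_pairV gA).
have [_ iterK' _] := aut_pair_iter n gA.
by rewrite -(iterK' y); apply: iter_h.
Qed.

Lemma ziterN (n : nat) x : z (- n%:Z) x = iter n g' x.
Proof. by case: n. Qed.

Lemma ziterS k x : z (k + 1) x = g (z k x).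
Proof.
have [_ _ g'K] := gA.
case: k => [n|[|n]].
- by rewrite (_ : n%:Z + 1 = n.+1%:Z); last by lia.
- rewrite (_ : Negz 0 + 1 = 0); last by lia.
  by rewrite /= g'K.
- rewrite (_ : Negz n.+1 + 1 = Negz n); last by rewrite !NegzE; lia.
  by rewrite /= g'K.
Qed.

Lemma ziterB1 k x : z (k - 1) x = g' (z k x).
Proof. by have [_ gK _] := gA; rewrite -{2}(subrK 1 k) ziterS gK. Qed.

Lemma ziterD k l x : z (k + l) x = z k (z l x).
Proof.
elim/int_rec: k => [|n IH|n IH]; first by rewrite add0r.
  rewrite (_ : n.+1%:Z = n%:Z + 1); last by lia.
  by rewrite addrAC !ziterS IH.
rewrite (_ : - n.+1%:Z = - n%:Z - 1); last by lia.
by rewrite addrAC !ziterB1 IH.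
Qed.

Lemma ziterK k : cancel (z k) (z (- k)).
Proof. by move=> x; rewrite -ziterD addNr. Qed.

Lemma ziterKV k : cancel (z (- k)) (z k).
Proof. by move=> x; rewrite -ziterD addrN. Qed.

Lemma aut_pair_ziter k : aut_pair (z k) (z (- k)).
Proof.
have zh : {homo z k : x y / x < y}.
  by case: k => n; [case: (aut_pair_iter n gA) | case: (aut_pair_iter n.+1 (aut_pairV gA))].
by split=> //; [apply: ziterK | apply: ziterKV].
Qed.

Lemma ziter_gt k x : 0 < k -> x < z k x.
Proof.
have [_ [d d_gt0 g_ge]] := gP.
case: k => [[|n]|//] // _; elim: n => [|n IH] /=.
  by apply: lt_le_trans (g_ge x); rewrite ltrDl.
by apply: lt_trans IH _; apply: lt_le_trans (g_ge _); rewrite ltrDl.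
Qed.

Lemma ziter_lt x : {mono z^~ x : k l / k < l}.
Proof.
suff ziter_homo : {homo z^~ x : k l / k < l} by exact: leW_mono (le_mono ziter_homo).
by move=> k l kl; rewrite -(subrK k l) ziterD ziter_gt // subr_gt0.
Qed.

Lemma ziter_le x : {mono z^~ x : k l / k <= l}.
Proof. by move=> k l; rewrite !leNgt ziter_lt. Qed.

Lemma iter_inv_le n x : iter n g' x <= x.
Proof. by rewrite -ziterN -[x in _ <= x]/(z 0 x) ziter_le oppr_le0. Qed.

Lemma ziter_window c k y : (c <= y < g c) = (z k c <= z k y < z (k + 1) c).
Proof.
rewrite ziterD -[g c]/(z 1 c).
by rewrite (aut_pair_le (aut_pair_ziter k)) (aut_pair_lt (aut_pair_ziter k)).
Qed.

Lemma exists_zindex c x : exists k, z k c <= x < z (k + 1) c.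
Proof.
have [m xm] := exists_iter_lt c x.
have exP : exists n, x < z (n%:Z - m%:Z) c.
  by have [n xn] := exists_iter_gt (z (- m%:Z) c) x; exists n; rewrite ziterD.
case: (ex_minnP exP) => -[|n] xn n_min.
  by move: xn; rewrite sub0r ziterN => /(lt_trans xm); rewrite ltxx.
exists (n%:Z - m%:Z); rewrite (_ : n%:Z - m%:Z + 1 = n.+1%:Z - m%:Z); last by lia.
by rewrite xn andbT leNgt; apply/negP => /n_min; rewrite ltnn.
Qed.

Lemma zindexP c x : z (zindex g g' c x) c <= x < z (zindex g g' c x + 1) c.
Proof. exact: epsilon_spec (exists_zindex c x). Qed.

Lemma zindex_eq c x k : z k c <= x < z (k + 1) c -> zindex g g' c x = k.
Proof.
move=> /andP[kx xk]; have /andP[jx xj] := zindexP c x.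
apply/eqP; rewrite eq_le -!ltzD1 -!(ziter_lt c).
by rewrite (le_lt_trans jx xk) (le_lt_trans kx xj).
Qed.

Lemma zindex_homo c : {homo zindex g g' c : x y / x <= y}.
Proof.
move=> x y xy; have /andP[kx _] := zindexP c x; have /andP[_ yk] := zindexP c y.
by rewrite -ltzD1 -(ziter_lt c) (le_lt_trans kx (le_lt_trans xy yk)).
Qed.

Lemma zindexS c x : zindex g g' c (g x) = zindex g g' c x + 1.
Proof.
apply: zindex_eq; have /andP[kx xk] := zindexP c x.
by rewrite !ziterS (aut_pair_le gA) (aut_pair_lt gA) kx -ziterS.
Qed.

End ZPowers.

(* On the fundamental domain [g2^k c, g2^(k+1) c) of g2 this is g1^k b g2^-k; when
   b maps [c, g2 c) onto [c, g1 c) it satisfies alpha g2 = g1 alpha. *)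
Definition intertwine (R : realFieldType) (g1 g1' g2 g2' b : R -> R) (c x : R) : R :=
  let k := zindex g2 g2' c x in ziter g1 g1' k (b (ziter g2 g2' (- k) x)).

Section Intertwine.
Variables (R : archiRealFieldType) (g1 g1' g2 g2' b b' : R -> R) (c : R).
Hypotheses (g1P : uniformly_positive g1 g1') (g2P : uniformly_positive g2 g2').
Hypotheses (bA : aut_pair b b') (b_c : b c = c) (b_g2c : b (g2 c) = g1 c).

Local Notation alpha := (intertwine g1 g1' g2 g2' b c).
Local Notation k2 := (zindex g2 g2' c).

Lemma intertwine_window x : ziter g1 g1' (k2 x) c <= alpha x < ziter g1 g1' (k2 x + 1) c.
Proof.
have := zindexP g2P c x; rewrite /intertwine; set k := k2 x => x_win.
have /andP[cy yg] : c <= ziter g2 g2' (- k) x < g2 c.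
  by rewrite (ziter_window g2P c k) (ziterKV g2P).
rewrite -(ziter_window g1P) -{1}b_c -b_g2c.
by rewrite (aut_pair_le bA) (aut_pair_lt bA) cy yg.
Qed.

Lemma zindex_intertwine x : zindex g1 g1' c (alpha x) = k2 x.
Proof. by apply: (zindex_eq g1P); apply: intertwine_window. Qed.

Lemma intertwineK : cancel alpha (intertwine g2 g2' g1 g1' b' c).
Proof.
have [_ bK _] := bA.
move=> x; rewrite {1}/intertwine zindex_intertwine /intertwine.
by rewrite (ziterK g1P) bK (ziterKV g2P).
Qed.

Lemma intertwine_homo : {homo alpha : x y / x < y}.
Proof.
move=> x y xy; have := zindex_homo g2P c (ltW xy); rewrite le_eqVlt => /orP[/eqP kxy|kxy].
  rewrite /intertwine -kxy (aut_pair_lt (aut_pair_ziter g1P _)) (aut_pair_lt bA).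
  by rewrite (aut_pair_lt (aut_pair_ziter g2P _)).
have /andP[_ ax] := intertwine_window x; have /andP[ya _] := intertwine_window y.
apply: lt_le_trans ax (le_trans _ ya).
by rewrite (ziter_le g1P) lezD1.
Qed.

Lemma intertwine_comm x : alpha (g2 x) = g1 (alpha x).
Proof.
rewrite /intertwine (zindexS g2P) (ziterS g1P) opprD.
by rewrite -[g2 x]/(ziter g2 g2' 1 x) -(ziterD g2P) addrNK.
Qed.

Lemma intertwine_fixed r : c <= r < g2 c -> b r = r -> alpha r = r.
Proof.
by move=> r_win br; rewrite /intertwine (@zindex_eq _ _ _ g2P _ _ 0).
Qed.

End Intertwine.

Lemma aut_pair_intertwine (R : archiRealFieldType) (g1 g1' g2 g2' b b' : R -> R) c :
  uniformly_positive g1 g1' -> uniformly_positive g2 g2' -> aut_pair b b' ->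
  b c = c -> b (g2 c) = g1 c ->
  aut_pair (intertwine g1 g1' g2 g2' b c) (intertwine g2 g2' g1 g1' b' c).
Proof.
move=> g1P g2P bA b_c b_g2c; have [_ bK _] := bA.
split; [exact: intertwine_homo g1P g2P bA b_c b_g2c |
        exact: intertwineK g1P g2P bA b_c b_g2c |].
apply: intertwineK g2P g1P (aut_pairV bA) _ _; first by rewrite -{1}b_c bK.
by rewrite -b_g2c bK.
Qed.

(** * Restrictions to orbit segments *)

Lemma exists_step (R : realFieldType) (v : nat -> R) t M :
  v 0%N <= t -> t < v M -> exists2 n, (n < M)%N & v n <= t < v n.+1.
Proof.
move=> v0t; elim: M => [|M IH] tvM; first by move: (le_lt_trans v0t tvM); rewrite ltxx.
case: (ltP t (v M)) => tv; last by exists M; rewrite // tv tvM.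
by have [n nM ntn] := IH tv; exists n => //; apply: ltnW.
Qed.

Definition orbit_segments (g : rat -> rat) (B : seq rat) (N : nat) : pmap :=
  [seq (iter n g b, iter n.+1 g b) | b <- B, n <- iota 0 N].

Section OrbitSegments.
Variables (g : rat -> rat) (B : seq rat) (N : nat).
Hypotheses (g_homo : {homo g : x y / x < y}) (g_gt : forall x, x < g x) (N_gt0 : (0 < N)%N).

Local Notation q := (orbit_segments g B N).

Lemma mem_orbit_segments x y : (x, y) \in q <->
  exists b n, [/\ b \in B, (n < N)%N, x = iter n g b & y = iter n.+1 g b].
Proof.
split=> [/allpairsP[[b n] /= [bB]]|[b [n [bB nN -> ->]]]].
  by rewrite mem_iota => nN [-> ->]; exists b, n.
by apply/allpairsP; exists (b, n); rewrite mem_iota.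
Qed.

Lemma orbit_segments_graph x y : (x, y) \in q -> y = g x.
Proof. by case/mem_orbit_segments => b [n [_ _ -> ->]]. Qed.

Lemma in_DR_orbit_segments x :
  in_DR q x <-> exists b n, [/\ b \in B, (n <= N)%N & x = iter n g b].
Proof.
split.
  case=> -[y /mem_orbit_segments[b [n [bB nN ex ey]]]].
    by exists b, n; split=> //; apply: ltnW.
  by exists b, n.+1.
case=> b [n [bB nN ->]]; case: (ltnP n N) => [nN'|Nn].
  by left; exists (iter n.+1 g b); apply/mem_orbit_segments; exists b, n.
have -> : n = N.-1.+1 by rewrite prednK //; apply/eqP; rewrite eqn_leq nN.
by right; exists (iter N.-1 g b); apply/mem_orbit_segments; exists b, N.-1; rewrite prednK.
Qed.

Lemma parity_orbit_segments x : in_DR q x -> parity q x Pos.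
Proof.
case=> -[y xy]; exists y; have gxy := orbit_segments_graph xy.
  by left; split=> //; apply/sign_of_Pos; rewrite gxy subr_gt0.
by right; split=> //; apply/sign_of_Pos; rewrite gxy subr_gt0.
Qed.

Lemma not_parity_Neg_orbit_segments x : ~ parity q x Neg.
Proof.
case=> y [[xy /sign_of_Neg]|[yx /sign_of_Neg]];
  rewrite ?(orbit_segments_graph xy) ?(orbit_segments_graph yx) subr_lt0 ltNge ltW //.
Qed.

Lemma related_orbit_segments x y z : (x, y) \in q -> x <= z <= y -> related q x z.
Proof.
move=> xy /andP[xz zy]; right; left; split; last by left; exists y.
by left; apply: parity_orbit_segments; left; exists y.
Qed.

Lemma sim_iter_orbit_segments b n : b \in B -> (n <= N)%N -> sim q b (iter n g b).
Proof.
move=> bB; elim: n => [|n IH] nN; first exact: sim_refl.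
apply: sim_trans (IH (ltnW nN)) (related_sim _).
apply: (@related_orbit_segments _ (iter n.+1 g b)); last by rewrite lexx ltW ?g_gt.
by apply/mem_orbit_segments; exists b, n.
Qed.

Lemma orbit_segments_good :
  B != [::] -> {in B &, forall b b', b' < iter N g b} -> Pgd Pos q.
Proof.
move=> B_neq0 B_close.
have g_lt : {mono g : x y / x < y} := leW_mono (le_mono g_homo).
have sim_B b b' : b \in B -> b' \in B -> b <= b' -> sim q b b'.
  move=> bB b'B bb'; have [n nN /andP[nb' b'n]] :=
    @exists_step _ (fun n => iter n g b) _ _ bb' (B_close _ _ bB b'B).
  apply: sim_trans (sim_iter_orbit_segments bB (ltnW nN)) (related_sim _).
  apply: (@related_orbit_segments _ (iter n.+1 g b)); last by rewrite nb' ltW.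
  by apply/mem_orbit_segments; exists b, n.
split; [split | split; [split |]].
- by move=> x y x' y' /orbit_segments_graph -> /orbit_segments_graph ->; rewrite g_lt.
- by move=> x _ y _; apply: parity_orbit_segments.
- exists (head 0 B); apply/in_DR_orbit_segments; exists (head 0 B), 0%N.
  by split=> //; move: B_neq0; case: (B) => // b0 B' _; rewrite inE eqxx.
- move=> x y /in_DR_orbit_segments[b [n [bB nN ->]]].
  move=> /in_DR_orbit_segments[b' [n' [b'B n'N ->]]].
  apply: sim_trans (sim_sym (sim_iter_orbit_segments bB nN)) _.
  apply: sim_trans (sim_iter_orbit_segments b'B n'N).
  by case: (leP b b') => bb'; [apply: sim_B | apply/sim_sym/sim_B => //; apply: ltW].
move=> a a' [aq [a'q [aa' [[_ [a_end a'_start]] | [[a_neg _] _]]]]]; last first.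
  exact: not_parity_Neg_orbit_segments (a_neg a (sim_refl _ _) aq).
case/in_DR_orbit_segments: aq aa' a_end => b [n [bB nN ->]] aa' b_end.
case/in_DR_orbit_segments: a'q aa' a'_start => b' [[|n'] [b'B n'N ->]] aa' b'_start; last first.
  by apply: b'_start; exists (iter n' g b'); apply/mem_orbit_segments; exists b', n'.
suff n_eq : n = N by move: (lt_trans aa' (B_close _ _ bB b'B)); rewrite n_eq ltxx.
apply/eqP; rewrite eqn_leq nN leqNgt; apply/negP => nN'.
by apply: b_end; exists (iter n.+1 g b); apply/mem_orbit_segments; exists b, n.
Qed.

End OrbitSegments.

Lemma exists_good_graph_through (g g' : rat -> rat) (W : seq rat) :
  uniformly_positive g g' -> exists q, Pgd Pos q /\ forall w, w \in W -> (w, g w) \in q.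
Proof.
(* The segments start K steps below W and have length 2K + 1, with K so large that they
   overlap; 0 is only there to make W nonempty. *)
move=> gP; have [gA _] := gP; have [g_homo _ _] := gA.
have iterKV n : cancel (iter n g') (iter n g) by case: (aut_pair_iter n gA).
have g_gt x : x < g x by apply: (ziter_gt gP (k := 1)).
pose W0 := 0 :: W.
pose m := \big[Num.min/0]_(w <- W0) w; pose M := \big[Num.max/0]_(w <- W0) w.
have [K mK] := exists_iter_gt gP m M.
exists (orbit_segments g [seq iter K g' w | w <- W0] (K + K).+1); split.
  apply: orbit_segments_good => // _ _ /mapP[w wW0 ->] /mapP[w' w'W0 ->].
  rewrite -addSn iterD iterKV /=.
  have w'M : iter K g' w' <= M.
    by apply: le_trans (iter_inv_le gP K w') _; apply: le_bigmax_seq.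
  apply: le_lt_trans (g_gt _); apply: le_trans w'M (le_trans (ltW mK) _).
  by rewrite (aut_pair_le (aut_pair_iter K gA)) ge_bigmin_seq.
move=> w wW; apply/mem_orbit_segments; exists (iter K g' w), K.
rewrite /= iterKV ltnS leq_addr; split=> //.
by rewrite inE map_f ?orbT.
Qed.

Theorem Psign_Pos_cofinal p : Psign Pos p -> exists q, Pgd Pos q /\ extends q p.
Proof.
move=> pP; have [g [g' [gP gp]]] :=
  pi_pos_extends_to_uniformly_positive pP.1 (fun a b => Psign_Pos_lt pP).
have [q [q_good qg]] := exists_good_graph_through [seq ab.1 | ab <- p] gP.
exists q; split=> // -[a b] ab; rewrite -(gp _ _ ab).
by apply: qg; rewrite (map_f fst ab).
Qed.

(** * Amalgamation *)

Lemma exists_separating_point (R : realFieldType) (A B X : seq R) :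
  {in A & B, forall a b, a < b} ->
  exists c, [/\ c \notin X, {in A, forall a, a < c} & {in B, forall b, c < b}].
Proof.
move=> AB; pose l := \big[Num.max/(\big[Num.min/0]_(b <- B) b - 1)]_(a <- A) a.
have lB b : b \in B -> l < b.
  move=> bB; rewrite /l big_seq; apply: bigmax_lt => [|a aA]; last exact: AB.
  have minB : \big[Num.min/0]_(b <- B) b <= b by apply: ge_bigmin_seq.
  by rewrite ltrBlDr (le_lt_trans minB) ?ltrDl.
have [u lu uX] := exists_gap_above (X ++ B) l.
have [lc cu] : l < (l + u) / 2 /\ (l + u) / 2 < u by split; lra.
exists ((l + u) / 2); split.
- by apply/negP => cX; have := uX _ _ lc; rewrite mem_cat cX => /(_ isT); lra.
- by move=> a aA; apply: le_lt_trans lc; apply: le_bigmax_seq.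
- by move=> b bB; apply: lt_le_trans cu _; apply: uX (lB _ bB); rewrite mem_cat bB orbT.
Qed.

Lemma Pgd_Pos_start_lt_end p s e : Pgd Pos p ->
  in_DR p s -> ~ in_rng p s -> in_DR p e -> ~ in_dom p e -> s < e.
Proof.
move=> [[_ pP] [_ no_bad]] sDR s_start eDR e_end.
case: (ltgtP s e) => // [es|se].
  case: (no_bad e s); split=> //; split=> //; split=> //; left; split=> //.
  by split; [|split] => [|| x xDR _ _]; apply: pP.
by case: sDR => // s_dom; case: e_end; rewrite -se.
Qed.

Lemma Pgd_Pos_separating_point p : Pgd Pos p -> exists c, [/\ ~ in_DR p c,
  forall x, in_DR p x -> x < c -> in_dom p x &
  forall x, in_DR p x -> c < x -> in_rng p x].
Proof.
move=> p_good; pose D := [seq ab.1 | ab <- p]; pose Rg := [seq ab.2 | ab <- p].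
have DRE x : in_DR p x <-> x \in D ++ Rg.
  by rewrite mem_cat /in_DR in_domE in_rngE; exact: (rwP orP).
pose starts := [seq x <- D ++ Rg | x \notin Rg].
pose ends := [seq x <- D ++ Rg | x \notin D].
have starts_lt_ends : {in starts & ends, forall s e, s < e}.
  move=> s e; rewrite !mem_filter => /andP[sR sX] /andP[eD eX].
  by apply: Pgd_Pos_start_lt_end p_good _ _ _ _; rewrite ?DRE ?in_domE ?in_rngE //; apply/negP.
have [c [cX cA cB]] := exists_separating_point (D ++ Rg) starts_lt_ends.
exists c; split; first by rewrite DRE; apply/negP.
  move=> x /DRE xX xc; apply/in_domE/negPn/negP => xD.
  by have := cB x; rewrite mem_filter xD xX => /(_ isT); rewrite ltNge ltW.
move=> x /DRE xX cx; apply/in_rngE/negPn/negP => xR.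
by have := cA x; rewrite mem_filter xR xX => /(_ isT); rewrite ltNge ltW.
Qed.

Lemma count_lt_subpred (T : eqType) (P Q : pred T) s z :
  subpred P Q -> z \in s -> Q z -> ~~ P z -> (count P s < count Q s)%N.
Proof.
move=> PQ + Qz nPz; elim: s => // x s IH; rewrite inE /= => /orP[/eqP<-|zs].
  by rewrite Qz (negbTE nPz) add0n add1n ltnS sub_count.
have := IH zs; have : (P x <= Q x)%N by case: (P x) (PQ x) => // ->.
lia.
Qed.

Lemma fixed_points_propagate p c (F : rat -> Prop) :
  (forall a b, (a, b) \in p -> a < b) -> ~ in_DR p c ->
  (forall x, in_DR p x -> x < c -> in_dom p x) ->
  (forall x, in_DR p x -> c < x -> in_rng p x) ->
  (forall a b, (a, b) \in p -> F a <-> F b) ->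
  (forall a b, (a, b) \in p -> a < c -> c < b -> F b) ->
  forall x, in_DR p x -> F x.
Proof.
(* Induction on the number of points of p strictly between x and c: one step of p from x
   towards c either lands closer to c or crosses it. *)
move=> p_lt cDR c_dom c_rng F_step F_cross.
pose X := [seq ab.1 | ab <- p] ++ [seq ab.2 | ab <- p].
have DRX x : in_DR p x -> x \in X.
  by rewrite mem_cat; case=> [/in_domE|/in_rngE] ->; rewrite ?orbT.
pose between x z := (x < z < c) || (c < z < x).
suff IH n x : (count (between x) X < n)%N -> in_DR p x -> F x by move=> x; apply: IH.
elim: n x => // n IH x x_lt xDR.
have closer y : in_DR p y -> between x y -> F y.
  move=> yDR xy; suff y_lt : (count (between y) X < count (between x) X)%N.
    by apply: (IH y _ yDR); lia.
  apply: (count_lt_subpred _ (DRX _ yDR) xy); last by rewrite /between !ltxx andbF.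
  move=> z; case/orP: xy => /andP[h1 h2] /orP[] /andP[h3 h4]; apply/orP.
  - by left; apply/andP; split; lra.
  - by move: (lt_trans h3 (lt_trans h4 h2)); rewrite ltxx.
  - by move: (lt_trans h3 (lt_trans h4 h1)); rewrite ltxx.
  - by right; apply/andP; split; lra.
have pairDR a b : (a, b) \in p -> in_DR p a /\ in_DR p b.
  by move=> ab; split; [left; exists b | right; exists a].
case: (ltgtP x c) => [xc|cx|xc]; last by rewrite xc in xDR.
  have [y xy] := c_dom x xDR xc; have [_ yDR] := pairDR _ _ xy.
  apply/(F_step _ _ xy); case: (ltgtP y c) => [yc|cy|yc]; last by rewrite yc in yDR.
    by apply: closer; rewrite // /between (p_lt _ _ xy) yc.
  exact: F_cross xy xc cy.
have [y yx] := c_rng x xDR cx; have [yDR _] := pairDR _ _ yx.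
case: (ltgtP y c) => [yc|cy|yc]; last by rewrite yc in yDR.
  exact: F_cross yx yc cx.
by apply/(F_step _ _ yx)/closer; rewrite // /between cy (p_lt _ _ yx) orbT.
Qed.

Lemma exists_conjugator_fixing p0 (g1 g1' g2 g2' : rat -> rat) :
  Pgd Pos p0 -> uniformly_positive g1 g1' -> uniformly_positive g2 g2' ->
  (forall a b, (a, b) \in p0 -> g1 a = b) -> (forall a b, (a, b) \in p0 -> g2 a = b) ->
  exists alpha alpha', [/\ aut_pair alpha alpha',
    forall x, alpha (g2 x) = g1 (alpha x) & forall x, in_DR p0 x -> alpha x = x].
Proof.
move=> p0_good g1P g2P g1p0 g2p0.
have [c [cDR c_dom c_rng]] := Pgd_Pos_separating_point p0_good.
have [[_ g1K _] _] := g1P; have [[g2_homo _ _] _] := g2P.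
(* b has to fix the ends of the pairs of p0 crossing c, which lie in [c, l]. *)
pose l := \big[Num.max/c]_(ab <- p0 | ab.1 < c < ab.2) ab.2.
have crossing_le a r : (a, r) \in p0 -> a < c < r -> r <= l.
  by move=> ar acr; apply: (le_bigmax_seq _ _ _ _ ar).
have l_lt (g g' : rat -> rat) : uniformly_positive g g' ->
    (forall a b, (a, b) \in p0 -> g a = b) -> l < g c.
  move=> gP gp0; have [[g_homo _ _] _] := gP.
  rewrite /l big_seq_cond; apply: bigmax_lt => [|[a r] /= /andP[ar /andP[ac _]]].
    exact: (ziter_gt gP (k := 1)).
  by rewrite -(gp0 _ _ ar) g_homo.
have [b [b' [bA b_g2c b_fix]]] :=
  exists_aut_pair_fix_below (l_lt _ _ g2P g2p0) (l_lt _ _ g1P g1p0).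
have b_c : b c = c by apply/b_fix/bigmax_ge_id.
pose alpha := intertwine g1 g1' g2 g2' b c.
have alpha_comm x : alpha (g2 x) = g1 (alpha x) := intertwine_comm b c g1P g2P x.
exists alpha, (intertwine g2 g2' g1 g1' b' c).
split=> //; first exact: aut_pair_intertwine g1P g2P bA b_c b_g2c.
apply: (@fixed_points_propagate p0 c (fun x => alpha x = x)
  (fun a b => Psign_Pos_lt p0_good.1) cDR c_dom c_rng).
  move=> a a' aa'; rewrite -{1}(g2p0 _ _ aa') -(g1p0 _ _ aa') alpha_comm.
  by split=> [-> //|]; apply: (can_inj g1K).
move=> a r ar ac cr; apply: (intertwine_fixed g1 g1' g2P).
  by rewrite (ltW cr) -(g2p0 _ _ ar) g2_homo.
by apply: b_fix; apply: (crossing_le a); rewrite ?ac.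
Qed.

Theorem Pgd_Pos_amalgamation p0 p1 p2 :
  Pgd Pos p0 -> Psign Pos p1 -> Psign Pos p2 -> extends p1 p0 -> extends p2 p0 ->
  exists p3 alpha, Pgd Pos p3 /\ is_aut alpha /\
    (forall x, in_DR p0 x -> alpha x = x) /\ extends p3 p1 /\ extends p3 (act alpha p2).
Proof.
move=> p0_good p1P p2P p01 p02.
have [g1 [g1' [g1P g1p]]] :=
  pi_pos_extends_to_uniformly_positive p1P.1 (fun a b => Psign_Pos_lt p1P).
have [g2 [g2' [g2P g2p]]] :=
  pi_pos_extends_to_uniformly_positive p2P.1 (fun a b => Psign_Pos_lt p2P).
have [alpha [alpha' [alphaA alpha_comm alpha_fix]]] :=
  exists_conjugator_fixing p0_good g1P g2P (fun a b ab => g1p a b (p01 _ ab))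
    (fun a b ab => g2p a b (p02 _ ab)).
have [p3 [p3_good p3g1]] :=
  exists_good_graph_through ([seq ab.1 | ab <- p1] ++ [seq alpha ab.1 | ab <- p2]) g1P.
exists p3, alpha; split=> //; split; first exact: aut_pair_is_aut alphaA.
split=> //; split.
  by move=> [a b] ab; rewrite -(g1p _ _ ab); apply: p3g1; rewrite mem_cat (map_f fst ab).
move=> _ /mapP[[x y] xy ->] /=; rewrite -(g2p _ _ xy) alpha_comm; apply: p3g1.
by rewrite mem_cat (map_f (fun ab => alpha ab.1) xy) orbT.
Qed.

(** * Inverting partial maps *)

Definition sgn_opp (s : sgn) : sgn :=
  match s with Pos => Neg | Zero => Zero | Neg => Pos end.

Lemma sgn_oppK : involutive sgn_opp. Proof. by case. Qed.

Lemma sign_ofN v : sign_of (- v) = sgn_opp (sign_of v).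
Proof. by rewrite /sign_of oppr_gt0 oppr_eq0; case: ltgtP. Qed.

Definition swap (p : pmap) : pmap := [seq (ab.2, ab.1) | ab <- p].

Lemma mem_swap p a b : ((a, b) \in swap p) = ((b, a) \in p).
Proof.
apply/mapP/idP => [[[b' a'] ba /= [-> ->]] // | ba].
by exists (b, a).
Qed.

Lemma swapK : involutive swap.
Proof. by elim=> // -[a b] p /= ->. Qed.

Lemma extends_swap q p : extends q p -> extends (swap q) (swap p).
Proof. by move=> qp [a b]; rewrite !mem_swap; apply: qp. Qed.

Lemma act_swap f p : act f (swap p) = swap (act f p).
Proof. by rewrite /act /swap -!map_comp. Qed.

Lemma in_dom_swap p x : in_dom (swap p) x <-> in_rng p x.
Proof. by split=> -[y xy]; exists y; rewrite ?mem_swap in xy *. Qed.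

Lemma in_rng_swap p x : in_rng (swap p) x <-> in_dom p x.
Proof. by split=> -[y yx]; exists y; rewrite ?mem_swap in yx *. Qed.

Lemma in_DR_swap p x : in_DR (swap p) x <-> in_DR p x.
Proof. by rewrite /in_DR in_dom_swap in_rng_swap; split=> -[]; auto. Qed.

Lemma parity_swap p x s : parity (swap p) x s <-> parity p x (sgn_opp s).
Proof.
suff parity_swap_sub q s' : parity (swap q) x s' -> parity q x (sgn_opp s').
  split; first exact: parity_swap_sub.
  by move=> px; rewrite -[s]sgn_oppK; apply: parity_swap_sub; rewrite swapK.
case=> y [[xy sy]|[yx sy]]; exists y.
  by right; rewrite -mem_swap -opprB sign_ofN sy.
by left; rewrite -mem_swap -opprB sign_ofN sy.
Qed.

Lemma related_swap p a b : related (swap p) a b -> related p a b.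
Proof.
rewrite /related !parity_swap /=.
case=> [->|[[ps cases]|[ps cases]]]; [by left | right; right | right; left].
all: split=> //; case: cases => [|[|[|]]] [c [pc ineq]]; rewrite mem_swap in pc.
all: by do ![by left; exists c | right]; exists c.
Qed.

Lemma sim_swap p a b : sim (swap p) a b <-> sim p a b.
Proof.
suff sim_swap_sub q x y : sim (swap q) x y -> sim q x y.
  by split; [exact: sim_swap_sub | rewrite -{1}(swapK p); exact: sim_swap_sub].
elim=> [x' y' /related_swap | x' | x' y' _ | x' y' z' _ IH1 _ IH2].
- exact: related_sim.
- exact: sim_refl.
- exact: sim_sym.
- exact: sim_trans IH2.
Qed.

Lemma orbital_parity_swap p x s :
  orbital_parity (swap p) x s <-> orbital_parity p x (sgn_opp s).
Proof.
split=> op y.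
  by rewrite -sim_swap -in_DR_swap => xy yDR; apply/parity_swap/op.
by rewrite sim_swap in_DR_swap => xy yDR; apply/parity_swap/op.
Qed.

Lemma Psign_swap s p : Psign s p -> Psign (sgn_opp s) (swap p).
Proof.
case=> pi_p pP; split=> [a b a' b'|a /in_DR_swap aDR].
  by rewrite !mem_swap => ba b'a'; rewrite (pi_p _ _ _ _ ba b'a').
by apply/orbital_parity_swap; rewrite sgn_oppK; apply: pP.
Qed.

Lemma between_parity_swap p a a' s :
  between_parity (swap p) a a' s -> between_parity p a a' (sgn_opp s).
Proof.
case=> /orbital_parity_swap oa [/orbital_parity_swap oa' between].
do 2 split=> //; move=> x xDR ax xa'.
by apply/orbital_parity_swap/between => //; apply/in_DR_swap.
Qed.

Lemma bad_pair_swap p a a' : bad_pair (swap p) a a' -> bad_pair p a a'.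
Proof.
case=> /in_DR_swap aDR [/in_DR_swap a'DR [aa' bad]]; do 3 split=> //.
case: bad => [[/between_parity_swap bp [na na']] | [/between_parity_swap bp [na' na]]].
  by right; split=> //; rewrite -in_dom_swap -in_rng_swap.
by left; split=> //; rewrite -in_dom_swap -in_rng_swap.
Qed.

Lemma Pgd_swap s p : Pgd s p -> Pgd (sgn_opp s) (swap p).
Proof.
case=> pP [[[a aDR] one] no_bad]; split; first exact: Psign_swap.
split; last by move=> x y /bad_pair_swap; apply: no_bad.
split; first by exists a; apply/in_DR_swap.
by move=> x y /in_DR_swap xDR /in_DR_swap yDR; apply/sim_swap/one.
Qed.

Theorem Psign_Neg_cofinal p : Psign Neg p -> exists q, Pgd Neg q /\ extends q p.
Proof.
move/Psign_swap => /Psign_Pos_cofinal[q [/Pgd_swap q_good /extends_swap pq]].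
by exists (swap q); split; rewrite // -(swapK p).
Qed.

Theorem Pgd_Neg_amalgamation p0 p1 p2 :
  Pgd Neg p0 -> Psign Neg p1 -> Psign Neg p2 -> extends p1 p0 -> extends p2 p0 ->
  exists p3 alpha, Pgd Neg p3 /\ is_aut alpha /\
    (forall x, in_DR p0 x -> alpha x = x) /\ extends p3 p1 /\ extends p3 (act alpha p2).
Proof.
move=> /Pgd_swap p0_good /Psign_swap p1P /Psign_swap p2P /extends_swap p01 /extends_swap p02.
have [p3 [alpha [/Pgd_swap p3_good [alpha_aut [alpha_fix [p13 p23]]]]]] :=
  Pgd_Pos_amalgamation p0_good p1P p2P p01 p02.
exists (swap p3), alpha; split=> //; split=> //; split.
  by move=> x /in_DR_swap; apply: alpha_fix.
split; first by rewrite -(swapK p1); apply: extends_swap.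
by rewrite -(swapK (act alpha p2)) -act_swap; apply: extends_swap.
Qed.

Theorem proposition4p1 :
  forall s : sgn, s = Pos \/ s = Neg ->
  (forall p, Psign s p -> exists q, Pgd s q /\ extends q p) /\
  (forall p0 p1 p2, Pgd s p0 -> Pgd s p1 -> Pgd s p2 ->
     extends p1 p0 -> extends p2 p0 ->
     exists p3 alpha, Pgd s p3 /\ is_aut alpha /\
       (forall x, in_DR p0 x -> alpha x = x) /\
       extends p3 p1 /\ extends p3 (act alpha p2)).
Proof.
move=> s [->|->]; split.
- exact: Psign_Pos_cofinal.
- by move=> p0 p1 p2 p0_good [p1P _] [p2P _]; apply: Pgd_Pos_amalgamation.
- exact: Psign_Neg_cofinal.
- by move=> p0 p1 p2 p0_good [p1P _] [p2P _]; apply: Pgd_Neg_amalgamation.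
Qed.
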